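(* Let $\Phi$ be an $N\times\mathcal{C}$ complex matrix with columns $\varphi_1,\dots,\varphi_{\mathcal{C}}$ (entries $\varphi_j(x)$, $x=1,\dots,N$) such that (i) $\sum_{j=1}^{\mathcal{C}}\varphi_j(x)\overline{\varphi_j(y)}=0$ whenever $x\neq y$, (ii) $\sum_{j=1}^{\mathcal{C}}\varphi_j(x)=0$ for all $x$, and (iii) the columns of $\Phi$ form a group under pointwise multiplication. Then the normalized columns $(N^{-1/2}\varphi_j)_{j=1,\dots,\mathcal{C}}$ form a tight frame in $\mathbb{C}^N$ with redundancy $\mathcal{C}/N$; that is, for every $v\in\mathbb{C}^N$, $\sum_{j=1}^{\mathcal{C}}|\langle v,N^{-1/2}\varphi_j\rangle|^2=\frac{\mathcal{C}}{N}\|v\|^2$.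
   Context: ''The columns form a group under pointwise multiplication'' means: for all $j,j'$ there is $j''$ with $\varphi_j(x)\varphi_{j'}(x)=\varphi_{j''}(x)$ for all $x$, and the set of columns is a group under this operation (its identity being the all-ones column). $\Phi$ is assumed to have no repeated columns. $\|\cdot\|$ is the Euclidean norm and $\langle\cdot,\cdot\rangle$ the standard Hermitian inner product. *)

From HB Require Import structures.
From mathcomp Require Import all_boot all_order all_algebra.
From mathcomp Require Import complex.
From mathcomp Require Import reals.
Set Implicit Arguments. Unset Strict Implicit. Unset Printing Implicit Defensive.
Import Order.TTheory GRing.Theory Num.Theory.
Local Open Scope ring_scope.

Definition hdot (C : numClosedFieldType) (N : nat) (v w : 'I_N -> C) : C :=
  \sum_(x < N) v x * (w x)^*.

Definition sqnorm (C : numClosedFieldType) (N : nat) (v : 'I_N -> C) : C :=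
  \sum_(x < N) `|v x| ^+ 2.

(* The columns of Phi form a group under pointwise multiplication
   (with identity the all-ones column); associativity is automatic. *)
Definition columns_form_mul_group (C : numClosedFieldType) (N M : nat)
    (Phi : 'M[C]_(N, M)) : Prop :=
  [/\ (exists e : 'I_M, forall x : 'I_N, Phi x e = 1),
      (forall j j' : 'I_M, exists j'' : 'I_M,
          forall x : 'I_N, Phi x j * Phi x j' = Phi x j'') &
      (forall j : 'I_M, exists j' : 'I_M,
          forall x : 'I_N, Phi x j * Phi x j' = 1)].

Definition no_repeated_columns (C : numClosedFieldType) (N M : nat)
    (Phi : 'M[C]_(N, M)) : Prop :=
  forall j j' : 'I_M, (forall x : 'I_N, Phi x j = Phi x j') -> j = j'.

(* Every column is a character of the finite group formed by the columns, so
   all entries are roots of unity and the rows of Phi have squared norm M.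
   Together with the orthogonality of the rows this says Phi Phi^* = M I, i.e.
   the columns scaled by N^(-1/2) form a tight frame with bound M/N. *)
From HB Require Import structures.
From mathcomp Require Import all_boot all_order all_algebra.
From mathcomp Require Import complex.
From mathcomp Require Import reals.
Set Implicit Arguments. Unset Strict Implicit. Unset Printing Implicit Defensive.
Import Order.TTheory GRing.Theory Num.Theory.
Local Open Scope ring_scope.

Lemma norm_eq1_of_expr_eq1 (R : numDomainType) (a : R) (n : nat) :
  (0 < n)%N -> a ^+ n = 1 -> `|a| = 1.
Proof.
move=> n_gt0 an1; apply/eqP.
by rewrite -(pexpr_eq1 n_gt0) ?normr_ge0 // -normrX an1 normr1.
Qed.

(* Multiplication by [a] permutes the nonzero values [f k], so comparing the
   products of all values gives [a ^+ #|I| = 1]. *)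
Lemma expr_card_eq1_of_mul_perm (R : idomainType) (I : finType) (f : I -> R)
    (a : R) (s : I -> I) :
  injective s -> (forall k, a * f k = f (s k)) -> (forall k, f k != 0) ->
  a ^+ #|I| = 1.
Proof.
move=> s_inj mul_f f_neq0.
have prod_neq0 : \prod_k f k != 0 by apply/prodf_neq0 => k _.
have : \prod_k f k = a ^+ #|I| * \prod_k f k.
  rewrite [LHS](reindex_inj s_inj) /= -prodr_const -big_split /=.
  by apply: eq_bigr => k _; rewrite mul_f.
by rewrite -[X in X = _]mul1r => /(mulIf prod_neq0).
Qed.

Section ColumnGroup.

Variables (C : numClosedFieldType) (N M : nat) (Phi : 'M[C]_(N, M)).
Hypotheses (Phi_group : columns_form_mul_group Phi)
           (Phi_uniq : no_repeated_columns Phi).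

Lemma col_entry_neq0 x k : Phi x k != 0.
Proof.
case: Phi_group => _ _ Phi_inv; have [k' inv_k] := Phi_inv k.
apply/eqP => Phi_xk0; move: (inv_k x).
by rewrite Phi_xk0 mul0r => /eqP; rewrite eq_sym oner_eq0.
Qed.

Lemma col_mul_perm j :
  exists s : 'I_M -> 'I_M,
    injective s /\ forall x k, Phi x j * Phi x k = Phi x (s k).
Proof.
case: Phi_group => _ Phi_mul Phi_inv.
have [s mul_s] := fin_all_exists (Phi_mul j); exists s; split=> // k1 k2 s12.
have [j' inv_j] := Phi_inv j; apply: Phi_uniq => x.
have : Phi x j' * (Phi x j * Phi x k1) = Phi x j' * (Phi x j * Phi x k2).
  by rewrite !mul_s s12.
by rewrite !mulrA (mulrC (Phi x j')) inv_j !mul1r.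
Qed.

Lemma norm_col_entry x j : `|Phi x j| = 1.
Proof.
have M_gt0 : (0 < M)%N.
  by case: Phi_group => -[e _] _ _; apply: leq_ltn_trans (ltn_ord e).
have [s [s_inj mul_s]] := col_mul_perm j.
apply: (norm_eq1_of_expr_eq1 M_gt0); rewrite -[M in _ ^+ M]card_ord.
exact: (expr_card_eq1_of_mul_perm s_inj (mul_s x) (col_entry_neq0 x)).
Qed.

Lemma row_sqnorm x : \sum_j Phi x j * (Phi x j)^* = M%:R.
Proof.
under eq_bigr => j _ do rewrite -normCK norm_col_entry expr1n.
by rewrite sumr_const card_ord.
Qed.

End ColumnGroup.

Lemma tight_frame_of_row_gram (C : numClosedFieldType) (I : finType) (N : nat)
    (phi : I -> 'I_N -> C) (a : C) :
  (forall x y, \sum_i phi i x * (phi i y)^* = (x == y)%:R * a) ->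
  forall v, \sum_i `|hdot v (phi i)| ^+ 2 = a * sqnorm v.
Proof.
move=> row_gram v.
have expand i : `|hdot v (phi i)| ^+ 2
    = \sum_x \sum_y v x * (v y)^* * (phi i y * (phi i x)^*).
  rewrite normCK /hdot rmorph_sum mulr_suml; apply: eq_bigr => x _.
  rewrite mulr_sumr; apply: eq_bigr => y _.
  by rewrite rmorphM /= conjCK mulrACA [(phi i x)^* * _]mulrC.
under eq_bigr => i _ do rewrite expand.
rewrite exchange_big /sqnorm mulr_sumr; apply: eq_bigr => x _.
rewrite exchange_big (bigD1 x) //= [X in _ + X]big1 => [|y y_neq_x].
  by rewrite -mulr_sumr row_gram eqxx mul1r addr0 -normCK mulrC.
by rewrite -mulr_sumr row_gram (negbTE y_neq_x) mul0r mulr0.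
Qed.

Theorem lemma2p4 (R : realType) (N M : nat) (Phi : 'M[R[i]]_(N, M))
  (Horth : forall x y : 'I_N, x != y -> \sum_(j < M) Phi x j * (Phi y j)^* = 0)
  (Hsum0 : forall x : 'I_N, \sum_(j < M) Phi x j = 0)
  (Hgrp : columns_form_mul_group Phi)
  (Hnorep : no_repeated_columns Phi) :
  forall v : 'I_N -> R[i],
    \sum_(j < M)
       `| hdot v (fun x => (sqrtC (N%:R : R[i]))^-1 * Phi x j) | ^+ 2
    = (M%:R / N%:R) * sqnorm v.
Proof.
set c := (sqrtC (N%:R : R[i]))^-1.
have c_ge0 : 0 <= c by rewrite invr_ge0 sqrtC_ge0 ler0n.
have c_sq : c * c^* = N%:R^-1 by rewrite (geC0_conj c_ge0) -expr2 exprVn sqrtCK.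
apply: tight_frame_of_row_gram => x y.
rewrite [RHS]mulrA [RHS]mulrC.
under eq_bigr => j _ do rewrite rmorphM /= mulrACA.
rewrite -mulr_sumr c_sq.
have [<-|x_neq_y] := eqVneq x y; first by rewrite row_sqnorm // mul1r.
by rewrite Horth // mul0r.
Qed.
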